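(* Let $(K,R,V)$ be a finite transitive Kripke tree with clusters, $A$ a modal formula, and $t$ a translation for $A$ based on a sequence $Q=\{q_i\}_{i=0}^\infty$ of atoms not occurring in $A$. Then there is a finite transitive irreflexive Kripke model $(K',R',V')$ such that for every node $k\in K$ there is a node $k'\in K'$ such that if $k\vDash A$ then $k'\vDash A^t$.
   Context: Modal formulas are built from atoms and $\bot$ using $\wedge,\vee,\to,\neg,\Box$. A finite transitive Kripke tree with clusters is a finite Kripke model with transitive accessibility relation $R$ whose clusters (maximal sets of mutually accessible nodes, or single irreflexive nodes) are ordered by $R$ as a tree; each cluster is either a single irreflexive node or a set of reflexive nodes. A translation $t$ for $A$ based on $Q$ is an assignment of natural numbers to the occurrences of $\Box$ in $A$ such that the number assigned to any box occurrence is greater than the numbers assigned to all box occurrences within its scope. $A^t$ is defined by: $p^t=p$ for atoms; $(B\circ C)^t=B^t\circ C^t$ for $\circ\in\{\wedge,\vee,\to\}$; $(\neg B)^t=\neg B^t$; $(\Box B)^t=\Box(\bigwedge_{i=0}^n q_i\to B^t)$ where $n$ is the number $t$ assigns to that box occurrence. *)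

From mathcomp Require Import all_boot.
Set Implicit Arguments. Unset Strict Implicit. Unset Printing Implicit Defensive.

Inductive form : Type :=
| Atom : nat -> form
| Bot : form
| And : form -> form -> form
| Or : form -> form -> form
| Imp : form -> form -> form
| Neg : form -> form
| Box : form -> form.

(* A formula together with a translation t: every occurrence of Box carries
   the natural number t assigns to it. *)
Inductive tform : Type :=
| TAtom : nat -> tform
| TBot : tform
| TAnd : tform -> tform -> tform
| TOr : tform -> tform -> tform
| TImp : tform -> tform -> tform
| TNeg : tform -> tform
| TBox : nat -> tform -> tform.

Fixpoint erase (t : tform) : form :=
  match t with
  | TAtom p => Atom p
  | TBot => Bot
  | TAnd a b => And (erase a) (erase b)
  | TOr a b => Or (erase a) (erase b)
  | TImp a b => Imp (erase a) (erase b)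
  | TNeg a => Neg (erase a)
  | TBox _ a => Box (erase a)
  end.

Fixpoint boxnums (t : tform) : seq nat :=
  match t with
  | TAtom _ | TBot => [::]
  | TAnd a b | TOr a b | TImp a b => boxnums a ++ boxnums b
  | TNeg a => boxnums a
  | TBox n a => n :: boxnums a
  end.

Fixpoint valid_numbering (t : tform) : Prop :=
  match t with
  | TAtom _ | TBot => True
  | TAnd a b | TOr a b | TImp a b => valid_numbering a /\ valid_numbering b
  | TNeg a => valid_numbering a
  | TBox n a => (forall m, m \in boxnums a -> m < n) /\ valid_numbering a
  end.

Definition translation_for (t : tform) (A : form) : Prop :=
  erase t = A /\ valid_numbering t.

Fixpoint conjQ (q : nat -> nat) (n : nat) : form :=
  match n with
  | 0 => Atom (q 0)
  | n'.+1 => And (conjQ q n') (Atom (q n'.+1))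
  end.

Fixpoint trans (q : nat -> nat) (t : tform) : form :=
  match t with
  | TAtom p => Atom p
  | TBot => Bot
  | TAnd a b => And (trans q a) (trans q b)
  | TOr a b => Or (trans q a) (trans q b)
  | TImp a b => Imp (trans q a) (trans q b)
  | TNeg a => Neg (trans q a)
  | TBox n a => Box (Imp (conjQ q n) (trans q a))
  end.

Fixpoint occurs (p : nat) (A : form) : bool :=
  match A with
  | Atom r => r == p
  | Bot => false
  | And a b | Or a b | Imp a b => occurs p a || occurs p b
  | Neg a => occurs p a
  | Box a => occurs p a
  end.

Fixpoint sat {K : Type} (R : K -> K -> bool) (V : nat -> K -> bool)
    (k : K) (A : form) : Prop :=
  match A with
  | Atom p => V p k
  | Bot => False
  | And a b => sat R V k a /\ sat R V k b
  | Or a b => sat R V k a \/ sat R V k b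
  | Imp a b => sat R V k a -> sat R V k b
  | Neg a => ~ sat R V k a
  | Box a => forall j, R k j -> sat R V j a
  end.

Definition transitive_rel {K : Type} (R : K -> K -> bool) : Prop :=
  forall x y z, R x y -> R y z -> R x z.

Definition irreflexive_rel {K : Type} (R : K -> K -> bool) : Prop :=
  forall x, ~~ R x x.

(* Transitive R on a finite K whose clusters are ordered by R as a (rooted)
   tree: there is a root whose cluster sees every other node, and the
   R-predecessors of any node are linearly ordered (up to clusters).
   Clusters are maximal sets of mutually accessible nodes (automatically
   reflexive by transitivity) or single irreflexive nodes. *)
Definition tree_with_clusters {K : finType} (R : rel K) : Prop :=
  transitive_rel R /\
  (exists r : K, forall k, k = r \/ R r k) /\
  (forall x y z, R x z -> R y z -> [\/ R x y, R y x | x = y]).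

From mathcomp Require Import all_boot.
From Stdlib Require Import Setoid.

(* Layer the model: K' = K * 'I_N with (x, i) R' (y, j) iff x R y and j < i,
   which is transitive and irreflexive.  The fresh atom q_m is made true at
   (x, i) exactly when m < i, so q_0 /\ ... /\ q_n holds exactly on the layers
   above n.  On a layer above every box number of t, the guarded box
   Box (q_0 /\ ... /\ q_n -> B^t) therefore ranges over the R-successors on
   the layers n < j, and since the boxes inside B carry smaller numbers,
   induction on t shows that (x, i) forces A^t iff x forces A. *)

Section LayeredModel.

Variables (K : Type) (R : rel K) (V : nat -> K -> bool) (q : nat -> nat) (N : nat).

Definition layer_rel : rel (K * 'I_N) := fun u v => R u.1 v.1 && (v.2 < u.2).

Definition layer_val (p : nat) (u : K * 'I_N) : bool :=
  if [pick m : 'I_N | q m == p] is Some m then m < u.2 else V p u.1.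

Lemma layer_rel_trans : transitive_rel R -> transitive_rel layer_rel.
Proof.
move=> Rtr u v w /andP [Ruv vu] /andP [Rvw wv].
by rewrite /layer_rel (Rtr _ _ _ Ruv Rvw) (ltn_trans wv vu).
Qed.

Lemma layer_rel_irrefl : irreflexive_rel layer_rel.
Proof. by move=> u; rewrite /layer_rel ltnn andbF. Qed.

Lemma layer_val_fresh p u : (forall m, q m != p) -> layer_val p u = V p u.1.
Proof.
by move=> qp; rewrite /layer_val; case: pickP => // m; rewrite (negbTE (qp m)).
Qed.

Hypothesis q_inj : injective q.

Lemma layer_val_q m u : m < N -> layer_val (q m) u = (m < u.2).
Proof.
move=> mN; rewrite /layer_val; case: pickP => [m' /eqP /q_inj -> // |].
by move/(_ (Ordinal mN)); rewrite eqxx.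
Qed.

Lemma sat_layer_conjQ n u :
  n < N -> sat layer_rel layer_val u (conjQ q n) <-> n < u.2.
Proof.
elim: n => [|n IHn] nN; first by rewrite /= layer_val_q.
have [IHl IHr] := IHn (ltnW nN); rewrite /= layer_val_q //.
by split=> [[] | nu] //; split=> //; apply/IHr/ltnW.
Qed.

Lemma sat_layer_translation (s : tform) (x : K) (i : 'I_N) :
  valid_numbering s -> (forall m, ~~ occurs (q m) (erase s)) ->
  all (fun m => m.+1 < i) (boxnums s) ->
  sat layer_rel layer_val (x, i) (trans q s) <-> sat R V x (erase s).
Proof.
elim: s x i => [p | | a IHa b IHb | a IHa b IHb | a IHa b IHb | a IHa | n a IHa]
  x i /=.
- by move=> _ fresh _; rewrite layer_val_fresh // => m; rewrite eq_sym.
- by [].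
1-3: move=> [va vb] /(fun fresh m => norP (fresh m)) /all_and2 [fa fb];
  by rewrite all_cat => /andP [ba bb]; rewrite IHa // IHb.
- by move=> va fresh bnd; rewrite IHa.
move=> [below va] fresh /andP [ni bnd].
have n1N : n.+1 < N := ltn_trans ni (ltn_ord i).
have nN : n < N := ltnW n1N.
split=> [H y Rxy | H [y j] /andP [/= Rxy _]].
- have := H (y, Ordinal n1N); rewrite /layer_rel /= Rxy ni sat_layer_conjQ //.
  rewrite ltnSn IHa //; first by apply.
  by apply/allP=> m /below.
- rewrite sat_layer_conjQ //= => nj; rewrite IHa //; first exact: H.
  by apply/allP=> m /below mn; apply: leq_ltn_trans nj.
Qed.

End LayeredModel.

Theorem lemma4p4 (K : finType) (R : rel K) (V : nat -> K -> bool)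
    (A : form) (t : tform) (q : nat -> nat) :
  tree_with_clusters R ->
  injective q ->
  (forall i, ~~ occurs (q i) A) ->
  translation_for t A ->
  exists (K' : finType) (R' : rel K') (V' : nat -> K' -> bool),
    transitive_rel R' /\ irreflexive_rel R' /\
    forall k : K, exists k' : K', sat R V k A -> sat R' V' k' (trans q t).
Proof.
move=> [Rtr _] q_inj fresh [erase_t valid_t]; subst A.
set M := \max_(m <- boxnums t) m.
exists (K * 'I_M.+3)%type, (@layer_rel K R _), (@layer_val K V q _).
split; first exact: layer_rel_trans.
split; first exact: layer_rel_irrefl.
move=> k; exists (k, ord_max); rewrite sat_layer_translation //.
by apply/allP=> m tm; rewrite /= !ltnS; apply: leq_bigmax_seq.
Qed.
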